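(* Fix $\theta\in(1/2,7/8]$, $h_1\in[0,1]$, $\alpha\in[0,1]$ and $[\underline h,\bar h]\subset(0,1)$. Assume the $J_X$ are independent with finite second moments and $\sum_X\mathrm{Var}(J_X)\le Cn$ for a constant $C$ independent of $n$, and let $C_P>0$ be a constant independent of $n,h_0,h_1,\alpha$ with $\mathbb E[(P_n(h_0,h_1,\alpha)-p_n(h_0,h_1,\alpha))^2]\le C_P/n$ for all parameters. Then for all sufficiently large $n$, $$\int_{\underline h}^{\bar h}dh_0\,\mathbb E\big[(\langle Q_1\rangle_{h_0,h_1,\alpha}-\mathbb E\langle Q_1\rangle_{h_0,h_1,\alpha})^2\big]\le\frac{5C_P+40}{n^{1/3}}.$$
   Context: Spins $\boldsymbol\sigma\in\{-1,1\}^n$, $\sigma_X=\prod_{i\in X}\sigma_i$. The couplings $J_X\ge0$, $X\subset\{1,\dots,n\}$, are independent random variables; $\tau_1,\dots,\tau_n$ are i.i.d. Poisson with mean $\alpha n^{\theta-1}$, independent of the couplings. Hamiltonian $\mathcal H(\boldsymbol\sigma)=-\sum_XJ_X\sigma_X-h_0\sum_i\sigma_i-h_1\sum_i\tau_i\sigma_i$, partition function $\mathcal Z_{h_0,h_1,\alpha}$, Gibbs expectation $\langle\cdot\rangle_{h_0,h_1,\alpha}$. $Q_1=\frac1n\sum_i\sigma_i$. Pressure $P_n=\frac1n\ln\mathcal Z_{h_0,h_1,\alpha}$, $p_n=\mathbb EP_n$ with $\mathbb E$ over all $J_X$ and $\boldsymbol\tau$. *)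

From HB Require Import structures.
From mathcomp Require Import all_boot all_order all_algebra.
From mathcomp Require Import all_classical all_reals all_analysis.
From mathcomp Require Import probability.
Set Implicit Arguments. Unset Strict Implicit. Unset Printing Implicit Defensive.
Import Order.TTheory GRing.Theory Num.Theory.
Local Open Scope classical_set_scope.
Local Open Scope ring_scope.

Section model.
Variable R : realType.

Definition spin (b : bool) : R := if b then 1 else -1.

Definition sigmaX n (s : {ffun 'I_n -> bool}) (X : {set 'I_n}) : R :=
  \prod_(i in X) spin (s i).

Definition hamiltonian n (J : {set 'I_n} -> R) (tau : 'I_n -> R) (h0 h1 : R)
    (s : {ffun 'I_n -> bool}) : R :=
  - (\sum_(X : {set 'I_n}) J X * sigmaX s X)
  - h0 * (\sum_(i < n) spin (s i))
  - h1 * (\sum_(i < n) tau i * spin (s i)).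

Definition Zpart n (J : {set 'I_n} -> R) (tau : 'I_n -> R) (h0 h1 : R) : R :=
  \sum_(s : {ffun 'I_n -> bool}) expR (- hamiltonian J tau h0 h1 s).

Definition pressure n (J : {set 'I_n} -> R) (tau : 'I_n -> R) (h0 h1 : R) : R :=
  ln (Zpart J tau h0 h1) / n%:R.

Definition Q1 n (s : {ffun 'I_n -> bool}) : R := (\sum_(i < n) spin (s i)) / n%:R.

Definition gibbs_Q1 n (J : {set 'I_n} -> R) (tau : 'I_n -> R) (h0 h1 : R) : R :=
  (\sum_(s : {ffun 'I_n -> bool}) Q1 s * expR (- hamiltonian J tau h0 h1 s))
  / Zpart J tau h0 h1.

End model.

Definition mutually_independent d (T : measurableType d) (R : realType)
    (P : probability T R) (I : finType) (X : I -> T -> R) : Prop :=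
  forall (S : {set I}) (B : I -> set R), (forall i, measurable (B i)) ->
    P (\bigcap_(i in [set i | i \in S]) (X i @^-1` B i)) =
    (\prod_(i in S) P (X i @^-1` B i))%E.

Definition coupling_family d (T : measurableType d) (R : realType) n
    (J : {set 'I_n} -> T -> R) (tau : 'I_n -> T -> nat) :
    ({set 'I_n} + 'I_n)%type -> T -> R :=
  fun k => match k with
           | inl X => J X
           | inr i => fun w => (tau i w)%:R
           end.

Definition poisson_mean (R : realType) (alpha theta : R) (n : nat) : R :=
  alpha * (n%:R `^ (theta - 1)).

(* For every realisation of the disorder, h0 |-> P_n(h0) is convex and 1-Lipschitz, and by
   Jensen's inequality for the Gibbs measure <Q_1> lies between the left and right
   difference quotients of P_n with step e. Since a variance is the least mean square
   deviation, E(<Q_1> - E<Q_1>)^2 is at most the mean square distance of <Q_1> to the right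
   difference quotient of p_n = E P_n; writing the quotients of P_n as those of p_n plus
   fluctuations, concentration bounds this by 12 C_P / (n e^2) plus 4/e times the second
   difference of p_n, which lies in [0, 2e]. Integrated over h0 the second differences
   telescope into boundary terms of order e^2, p_n being Lipschitz, and e = 2 n^(-1/3)
   gives (3 C_P (hhi - hlo) + 32) / n^(1/3). *)

From HB Require Import structures.
From mathcomp Require Import all_boot all_order all_algebra.
From mathcomp Require Import all_classical all_reals all_analysis.
From mathcomp Require Import probability measurable_realfun.
From mathcomp Require Import ring lra.
Import Order.TTheory GRing.Theory Num.Theory.
Import numFieldNormedType.Exports.
Set Implicit Arguments. Unset Strict Implicit. Unset Printing Implicit Defensive.
Local Open Scope classical_set_scope.
Local Open Scope ring_scope.

Lemma normr_divn_le1 (R : realFieldType) (x : R) m : `|x| <= m%:R -> `|x / m%:R| <= 1.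
Proof.
case: m => [|m] xm; first by rewrite invr0 mulr0 normr0 ler01.
by rewrite normrM normfV normr_nat ler_pdivrMr ?ltr0Sn // mul1r.
Qed.

Section gibbs_measure.
Variables (R : realType) (n : nat) (J : {set 'I_n} -> R) (tau : 'I_n -> R) (h1 : R).
Implicit Types (h d : R) (s : {ffun 'I_n -> bool}).

Definition spin_sum s : R := \sum_(i < n) spin R (s i).

Lemma normr_spin b : `|spin R b| = 1.
Proof. by case: b; rewrite /spin ?normrN normr1. Qed.

Lemma normr_spin_sum s : `|spin_sum s| <= n%:R.
Proof.
apply: (le_trans (ler_norm_sum _ _ _)).
by under eq_bigr do rewrite normr_spin; rewrite sumr_const card_ord.
Qed.

Lemma normr_Q1 s : `|Q1 R s| <= 1.
Proof. exact: normr_divn_le1 (normr_spin_sum s). Qed.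

Lemma hamiltonianD_h0 h d s :
  - hamiltonian J tau (h + d) h1 s = - hamiltonian J tau h h1 s + d * spin_sum s.
Proof. rewrite /hamiltonian /spin_sum; ring. Qed.

Lemma Zpart_gt0 h : 0 < Zpart J tau h h1.
Proof.
rewrite /Zpart (bigD1 [ffun=> true]) //= ltr_pwDl ?expR_gt0 //.
by apply: sumr_ge0 => s _; exact: expR_ge0.
Qed.

Lemma normr_gibbs_Q1 h : `|gibbs_Q1 J tau h h1| <= 1.
Proof.
rewrite /gibbs_Q1 normrM normfV (gtr0_norm (Zpart_gt0 h)) ler_pdivrMr ?Zpart_gt0 // mul1r.
apply: (le_trans (ler_norm_sum _ _ _)); apply: ler_sum => s _.
by rewrite normrM (gtr0_norm (expR_gt0 _)) ler_piMl ?expR_ge0 ?normr_Q1.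
Qed.

Hypothesis n_gt0 : (0 < n)%N.

(* Jensen for the Gibbs average of [exp (d * spin_sum)], through [1 + x <= exp x]. *)
Lemma Zpart_shift_ge h d :
  expR (d * n%:R * gibbs_Q1 J tau h h1) * Zpart J tau h h1 <= Zpart J tau (h + d) h1.
Proof.
set Z := Zpart J tau h h1; set mu := d * n%:R * gibbs_Q1 J tau h h1.
pose w s := expR (- hamiltonian J tau h h1 s).
have Zw : Z = \sum_s w s by [].
have mean_dS : \sum_s w s * (d * spin_sum s) = mu * Z.
  rewrite /mu /gibbs_Q1 -/Z -!mulrA mulVf ?gt_eqF ?Zpart_gt0 // mulr1 !mulr_sumr.
  apply: eq_bigr => s _; rewrite /Q1 -/(spin_sum s) /w; field.
  by rewrite pnatr_eq0 -lt0n.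
have -> : Zpart J tau (h + d) h1 = \sum_s w s * expR (mu + (d * spin_sum s - mu)).
  by apply: eq_bigr => s _; rewrite subrKC hamiltonianD_h0 expRD.
have -> : expR mu * Z = \sum_s w s * (expR mu * (1 + (d * spin_sum s - mu))).
  rewrite (eq_bigr (fun s => expR mu * (w s + (w s * (d * spin_sum s) - mu * w s)))).
    by rewrite -mulr_sumr big_split /= sumrB mean_dS -mulr_sumr -Zw subrr addr0.
  by move=> s _; ring.
apply: ler_sum => s _; rewrite expRD ler_wpM2l ?expR_ge0 // ler_wpM2l ?expR_ge0 //.
exact: expR_ge1Dx.
Qed.

Lemma pressure_tangent h d :
  d * gibbs_Q1 J tau h h1 <= pressure J tau (h + d) h1 - pressure J tau h h1.
Proof.
have := Zpart_shift_ge h d; rewrite -ler_ln ?posrE ?mulr_gt0 ?expR_gt0 ?Zpart_gt0 //.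
rewrite lnM ?posrE ?expR_gt0 ?Zpart_gt0 // expRK /pressure -mulrBl.
rewrite ler_pdivlMr ?ltr0n //; lra.
Qed.

Lemma pressure_lipschitz a b :
  `|pressure J tau a h1 - pressure J tau b h1| <= `|a - b|.
Proof.
have lower h d : - `|d| <= d * gibbs_Q1 J tau h h1.
  rewrite lerNl -mulrN; apply: (le_trans (ler_norm _)).
  by rewrite normrM normrN ler_piMr ?normr_gibbs_Q1.
have := pressure_tangent b (a - b); have := pressure_tangent a (b - a).
rewrite !subrKC; have := lower b (a - b); have := lower a (b - a).
rewrite distrC ler_norml; lra.
Qed.

Lemma pressure_convex h d : 0 <=
  pressure J tau (h + d) h1 + pressure J tau (h - d) h1 - 2 * pressure J tau h h1.
Proof.
have := pressure_tangent h d; have := pressure_tangent h (- d); rewrite mulNr; lra.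
Qed.

Lemma gibbs_Q1_between_slopes h d : 0 < d ->
  (pressure J tau h h1 - pressure J tau (h - d) h1) / d <= gibbs_Q1 J tau h h1 <=
  (pressure J tau (h + d) h1 - pressure J tau h h1) / d.
Proof.
move=> d_gt0; have := pressure_tangent h d; have := pressure_tangent h (- d).
rewrite ler_pdivrMr // ler_pdivlMr // mulNr; move=> ? ?; apply/andP; split; lra.
Qed.

End gibbs_measure.

Section measurable_gibbs.
Context d (T : measurableType d) (R : realType) (n : nat).
Variables (J : {set 'I_n} -> T -> R) (tau : 'I_n -> T -> R) (h0 h1 : R).
Hypothesis mJ : forall X, measurable_fun setT (J X).
Hypothesis mtau : forall i, measurable_fun setT (tau i).

Let measurable_weight s :
  measurable_fun setT (fun w => expR (- hamiltonian (J ^~ w) (tau ^~ w) h0 h1 s)).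
Proof.
do 2 apply: measurableT_comp => //; rewrite /hamiltonian.
apply: measurable_funB.
  apply: measurable_funB => //; apply: measurableT_comp => //.
  by apply: measurable_sum => X; apply: measurable_funM.
by apply: measurable_funM => //; apply: measurable_sum => i; apply: measurable_funM.
Qed.

Let measurable_ln_Zpart :
  measurable_fun setT (fun w => ln (Zpart (J ^~ w) (tau ^~ w) h0 h1)).
Proof. by apply: measurableT_comp => //; exact: measurable_sum. Qed.

Lemma measurable_pressure :
  measurable_fun setT (fun w => pressure (J ^~ w) (tau ^~ w) h0 h1).
Proof. exact: measurable_funM. Qed.

Lemma measurable_gibbs_Q1 :
  measurable_fun setT (fun w => gibbs_Q1 (J ^~ w) (tau ^~ w) h0 h1).
Proof.
have -> : (fun w => gibbs_Q1 (J ^~ w) (tau ^~ w) h0 h1) =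
    (fun w => (\sum_s Q1 R s * expR (- hamiltonian (J ^~ w) (tau ^~ w) h0 h1 s)) *
              expR (- ln (Zpart (J ^~ w) (tau ^~ w) h0 h1))).
  by apply/funext => w; rewrite expRN lnK // posrE Zpart_gt0.
apply: measurable_funM; first by apply: measurable_sum => s; exact: measurable_funM.
by do 2 apply: measurableT_comp => //.
Qed.

End measurable_gibbs.

Lemma lipschitz_continuous (R : realType) (g : R -> R) (M : R) : 0 <= M ->
  (forall x y, `|g x - g y| <= M * `|x - y|) -> continuous g.
Proof.
move=> M0 gM x; have M1 : 0 < M + 1 by rewrite ltr_wpDl.
apply/cvgrPdist_lt => e e0; near=> y.
apply: (le_lt_trans (gM x y)); apply: (@le_lt_trans _ _ ((M + 1) * `|x - y|)).
  by rewrite ler_wpM2r // lerDl.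
rewrite -ltr_pdivlMl //; near: y.
by apply: (@cvgr_dist_lt _ _ _ (nbhs x) _ (fun y : R => y) x) => //; rewrite mulr_gt0 ?invr_gt0.
Unshelve. all: by end_near. Qed.

Section lipschitz_primitive.
Context {R : realType}.
Notation mu := (@lebesgue_measure R).
Variables (g : R -> R) (L : R).
Hypothesis g_lip : forall x y, `|g x - g y| <= `|x - y|.

Let g_cont : continuous g.
Proof. by apply: (@lipschitz_continuous _ _ 1) => // x y; rewrite mul1r. Qed.

Let Phi x := parameterized_integral mu L x g.

Lemma primitive_derive x : L < x -> derivable Phi x 1 /\ (Phi^`())%classic x = g x.
Proof.
move=> Lx; apply: (@continuous_FTC1_closed R g L x (x + 1)) => //.
  by rewrite ltrDl.
apply: continuous_compact_integrable; first exact: segment_compact.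
- exact: continuous_subspaceT.
- exact: g_cont.
Qed.

Lemma is_derive_primitive x : L < x -> is_derive x 1 Phi (g x).
Proof.
by move=> /primitive_derive[dPhi <-]; rewrite derive1E; exact: derivableP.
Qed.

Lemma is_derive_primitive_shift c x : L < x + c ->
  is_derive x 1 (fun y => Phi (y + c)) (g (x + c)).
Proof.
move=> Lxc; have dPhi : is_derive (shift c x) 1 Phi (g (x + c)).
  exact: is_derive_primitive.
by have := is_derive1_comp dPhi (is_derive_shift x 1 c); rewrite mulr1.
Qed.

Lemma continuous_primitive x : L < x -> {for x, continuous Phi}.
Proof.
by move=> /primitive_derive[dPhi _]; exact/differentiable_continuous/derivable1_diffP.
Qed.

Lemma primitive_increment u e : L < u -> 0 < e ->
  exists2 c, u < c < u + e & Phi (u + e) - Phi u = g c * e.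
Proof.
move=> Lu e0; have ue : u < u + e by rewrite ltrDl.
have dPhi x : x \in `]u, u + e[ -> is_derive x 1 Phi (g x).
  rewrite in_itv /= => /andP[ux _]; exact/is_derive_primitive/(lt_trans Lu).
have cPhi : {within `[u, u + e], continuous Phi}.
  apply: continuous_in_subspaceT => x; rewrite inE /= in_itv /= => /andP[ux _].
  exact/continuous_primitive/(lt_le_trans Lu).
have [c cue ->] := MVT ue dPhi cPhi.
by exists c; [move: cue; rewrite in_itv | rewrite addrAC subrr add0r].
Qed.

Lemma is_derive_primitive_second_difference e x : L < x - e -> 0 <= e ->
  is_derive x 1 (fun y => Phi (y + e) - 2 * Phi y + Phi (y - e)) (g (x + e) - 2 * g x + g (x - e)).
Proof.
move=> Lxe e_ge0; have [Lx1 Lx2] : L < x + e /\ L < x by split; lra.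
exact: is_deriveD (is_deriveB (is_derive_primitive_shift Lx1)
  (is_deriveZ 2 (is_derive_primitive Lx2))) (is_derive_primitive_shift (c := - e) Lxe).
Qed.

(* Each half of the second difference is [e] times a value of [g], at points at most [2 e] apart. *)
Lemma primitive_second_difference u e : L < u - e -> 0 < e ->
  `|Phi (u + e) - 2 * Phi u + Phi (u - e)| <= 2 * e ^+ 2.
Proof.
move=> Lue e0; have Lu : L < u by lra.
have [c1 /andP[? ?] E1] := primitive_increment Lu e0.
have [c2 /andP[? ?] E2] := primitive_increment Lue e0.
rewrite subrK in E2.
have -> : Phi (u + e) - 2 * Phi u + Phi (u - e) = e * (g c1 - g c2) by lra.
rewrite normrM gtr0_norm // expr2 mulrCA ler_pM2l //.
apply: (le_trans (g_lip c1 c2)); rewrite ler_norml; apply/andP; split; lra.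
Qed.

End lipschitz_primitive.

Lemma continuous_second_difference_quotient (R : realType) (g : R -> R) (e k c : R) :
  (forall x y, `|g x - g y| <= `|x - y|) -> 0 < e -> 0 <= c ->
  continuous (fun x => k + c * ((g (x + e) + g (x - e) - 2 * g x) / e)).
Proof.
move=> g_lip e_gt0 c_ge0; apply: (@lipschitz_continuous _ _ (4 * c / e)).
  by rewrite divr_ge0 ?mulr_ge0 // ltW.
move=> x y; have -> : k + c * ((g (x + e) + g (x - e) - 2 * g x) / e) -
    (k + c * ((g (y + e) + g (y - e) - 2 * g y) / e)) = c / e *
    ((g (x + e) - g (y + e)) + (g (x - e) - g (y - e)) - 2 * (g x - g y)).
  by field; exact: lt0r_neq0.
have -> : 4 * c / e * `|x - y| = c / e * (4 * `|x - y|) by ring.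
rewrite normrM ger0_norm ?divr_ge0 ?(ltW e_gt0) // ler_wpM2l ?divr_ge0 ?(ltW e_gt0) //.
have := g_lip (x + e) (y + e); have := g_lip (x - e) (y - e); have := g_lip x y.
have -> : x + e - (y + e) = x - y by ring.
have -> : x - e - (y - e) = x - y by ring.
rewrite !ler_norml => /andP[? ?] /andP[? ?] /andP[? ?]; apply/andP; split; lra.
Qed.

Lemma integral_second_difference_le (R : realType) (g : R -> R) (a b e k c : R) :
  (forall x y, `|g x - g y| <= `|x - y|) -> a <= b -> 0 < e -> 0 <= c ->
  (\int[lebesgue_measure]_(x in `[a, b])
     ((k + c * ((g (x + e) + g (x - e) - 2 * g x) / e))%:E) <=
   (k * (b - a) + 4 * c * e)%:E)%E.
Proof.
move=> g_lip; rewrite le_eqVlt => /orP[/eqP <- e0 c0 | ab e0 c0].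
  by rewrite set_itv1 integral_set1 subrr mulr0 add0r lee_fin !mulr_ge0 // ltW.
pose L := a - e - 1; pose Phi x := parameterized_integral lebesgue_measure L x g.
pose D x := Phi (x + e) - 2 * Phi x + Phi (x - e).
pose f x := k + c * ((g (x + e) + g (x - e) - 2 * g x) / e).
pose F x := k * x + c / e * D x.
have dF x : a <= x -> is_derive x 1 F (f x).
  move=> ax; have Lxe : L < x - e by rewrite /L; lra.
  have dD := is_derive_primitive_second_difference g_lip Lxe (ltW e0).
  have dF := is_deriveD (is_deriveZ k (@is_derive_id _ _ x 1)) (is_deriveZ (c / e) dD).
  apply: is_derive_eq.
  rewrite -[k%:A]/(k * 1) -[_ *: _]/(c / e * (g (x + e) - 2 * g x + g (x - e))).
  rewrite /f; field; exact: lt0r_neq0.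
have cf : {within `[a, b], continuous f}.
  exact/continuous_subspaceT/continuous_second_difference_quotient.
have cF x : a <= x -> {for x, continuous F}.
  by move=> /dF[dFx _]; exact/differentiable_continuous/derivable1_diffP.
have dLR : derivable_oo_LRcontinuous F a b.
  split.
  - by move=> x; rewrite in_itv /= => /andP[/ltW /dF[]].
  - exact: cvg_at_right_filter (cF a (lexx a)).
  - exact: cvg_at_left_filter (cF b (ltW ab)).
have F'f : {in `]a, b[, (F^`())%classic =1 f}.
  by move=> x; rewrite in_itv /= => /andP[/ltW /dF[_ <-]]; rewrite derive1E.
rewrite (continuous_FTC2 ab cf dLR F'f) -EFinB lee_fin.
have [La Lb] : L < a - e /\ L < b - e by rewrite /L; split; lra.
have hD : c / e * (D b - D a) <= 4 * c * e.
  have -> : 4 * c * e = c / e * (4 * e ^+ 2) by field; exact: lt0r_neq0.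
  apply: ler_wpM2l; first by rewrite divr_ge0 // ltW.
  have := primitive_second_difference g_lip La e0.
  have := primitive_second_difference g_lip Lb e0.
  rewrite /D /Phi !ler_norml => /andP[? ?] /andP[? ?]; lra.
rewrite /F; rewrite mulrBr in hD; rewrite mulrBr; lra.
Qed.

(* No measurability is needed: the integral of a nonnegative function is the supremum of
   the integrals of the simple functions below it. *)
Lemma ge0_le_integral_nonmeasurable d (T : measurableType d) (R : realType)
    (mu : {measure set T -> \bar R}) (D : set T) (f1 f2 : T -> \bar R) :
  (forall x, D x -> (0 <= f1 x)%E) -> (forall x, D x -> (f1 x <= f2 x)%E) ->
  (\int[mu]_(x in D) f1 x <= \int[mu]_(x in D) f2 x)%E.
Proof.
move=> f1_ge0 f12; have f2_ge0 x : D x -> (0 <= f2 x)%E.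
  by move=> Dx; exact: le_trans (f1_ge0 x Dx) (f12 x Dx).
rewrite (ge0_integralE _ f1_ge0) (ge0_integralE _ f2_ge0).
apply: ereal_sup_le => _ [h /= hf1 <-]; exists h => //= x.
apply: (le_trans (hf1 x)); rewrite /patch; case: ifP => // /[!inE] Dx.
exact: f12.
Qed.

Lemma sqr_le_between (R : realDomainType) (x y z t : R) :
  y - t <= z <= x -> z ^+ 2 <= x ^+ 2 + 2 * y ^+ 2 + 2 * t ^+ 2.
Proof.
move=> /andP[lo hi]; have [z_ge0 | z_lt0] := lerP 0 z.
  have : z ^+ 2 <= x ^+ 2 by rewrite !expr2; nra.
  by have := sqr_ge0 y; have := sqr_ge0 t; lra.
have : z ^+ 2 <= (y - t) ^+ 2 by rewrite !expr2; nra.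
by have := sqr_ge0 (y + t); rewrite !expr2; nra.
Qed.

(* Used with [x] the magnetisation, [p] the pressure at [h - e], [h], [h + e] and [q] its mean. *)
Lemma sqr_dev_le_between_slopes (R : realFieldType) (e x p_ p0 p1 q_ q0 q1 : R) :
  0 < e -> (p0 - p_) / e <= x <= (p1 - p0) / e ->
  (x - (q1 - q0) / e) ^+ 2 <= 2 / e ^+ 2 * (p1 - q1) ^+ 2 + 6 / e ^+ 2 * (p0 - q0) ^+ 2 +
    4 / e ^+ 2 * (p_ - q_) ^+ 2 + 2 * ((q1 + q_ - 2 * q0) / e) ^+ 2.
Proof.
move=> e_gt0 /andP[lo hi]; have e_neq0 : e != 0 by rewrite gt_eqF.
set a1 := p1 - q1; set a0 := p0 - q0; set a_ := p_ - q_; set t := (q1 + q_ - 2 * q0) / e.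
have between : (a0 - a_) / e - t <= x - (q1 - q0) / e <= (a1 - a0) / e.
  have -> : (a0 - a_) / e - t = (p0 - p_) / e - (q1 - q0) / e by rewrite /t /a0 /a_; field.
  have -> : (a1 - a0) / e = (p1 - p0) / e - (q1 - q0) / e by rewrite /a1 /a0; field.
  by apply/andP; split; lra.
have := sqr_le_between between; rewrite !expr_div_n.
have : 0 <= (a1 + a0) ^+ 2 / e ^+ 2 by rewrite divr_ge0 ?sqr_ge0.
have : 0 <= (a0 + a_) ^+ 2 / e ^+ 2 by rewrite divr_ge0 ?sqr_ge0.
lra.
Qed.

Section real_expectation.
Context d (T : measurableType d) (R : realType) (P : probability T R).
Implicit Types (f g : T -> R) (k M : R).
Local Notation L1 := (Lfun P 1).

Definition Rexpectation f : R := fine ('E_P[f])%E.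

Lemma Lfun1_expectationE f : f \in L1 -> ('E_P[f] = (Rexpectation f)%:E)%E.
Proof. by move=> fL; rewrite /Rexpectation fineK // expectation_fin_num. Qed.

Lemma Lfun_measurable p f : f \in Lfun P p -> measurable_fun setT f.
Proof. by move/sub_Lfun_mfun; rewrite inE. Qed.

Lemma Lfun1_dominated f g : measurable_fun setT f -> g \in L1 ->
  (forall w, `|f w| <= g w) -> f \in L1.
Proof.
move=> mf /Lfun1_integrable/integrableP[mg gfin] fg.
apply/Lfun1_integrable/integrableP; split; first exact/measurable_EFinP.
apply: le_lt_trans gfin; apply: ge0_le_integral => //.
- by do 2 apply: measurableT_comp => //.
- by do 2 apply: measurableT_comp => //.
- by move=> w _ /=; rewrite !lee_fin (le_trans (fg w)) // ler_norm.
Qed.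

Lemma Lfun1_bounded f M : measurable_fun setT f ->
  (forall w, `|f w| <= M) -> f \in L1.
Proof. by move=> mf fM; apply: (Lfun1_dominated mf (Lfun_cst P M 1)). Qed.

Lemma Lfun1D f g : f \in L1 -> g \in L1 -> (fun w => f w + g w) \in L1.
Proof. exact: rpredD. Qed.

Lemma Lfun1Z f k : f \in L1 -> (fun w => k * f w) \in L1.
Proof. by have -> : (fun w => k * f w) = k *: f by []; exact: rpredZ. Qed.

Lemma Lfun1_sqr f K : measurable_fun setT f ->
  ('E_P[fun w => (f w ^+ 2)%R] <= K%:E)%E -> (fun w => f w ^+ 2) \in L1.
Proof.
move=> mf fK; apply/Lfun1_integrable/integrableP; split.
  by apply/measurable_EFinP; exact: measurable_funX.
apply: (@le_lt_trans _ _ K%:E); last exact: ltey.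
move: fK; rewrite unlock; apply: le_trans; rewrite le_eqVlt; apply/orP; left.
by apply/eqP/eq_integral => w _ /=; rewrite ger0_norm ?sqr_ge0.
Qed.

Lemma Lfun1_of_sqr f : measurable_fun setT f -> (fun w => f w ^+ 2) \in L1 -> f \in L1.
Proof.
move=> mf f2L; apply: (Lfun1_dominated mf (Lfun1D (Lfun_cst P 1 1) f2L)) => w /=.
rewrite -real_normK ?num_real //; have := sqr_ge0 (`|f w| - 1); have := normr_ge0 (f w).
rewrite !expr2; lra.
Qed.

Lemma Lfun1_sqr_bounded f M c : measurable_fun setT f ->
  (forall w, `|f w| <= M) -> (fun w => (f w - c) ^+ 2) \in L1.
Proof.
move=> mf fM; apply: (@Lfun1_bounded _ ((M + `|c|) ^+ 2)).
  by apply: measurable_funX; apply: measurable_funB.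
move=> w; rewrite ger0_norm ?sqr_ge0 //.
have /andP[? ?] : - M <= f w <= M by rewrite -ler_norml.
have /andP[? ?] : - `|c| <= c <= `|c| by rewrite -ler_norml.
have h1 : 0 <= M + `|c| - (f w - c) by lra.
have h2 : 0 <= M + `|c| + (f w - c) by lra.
rewrite !expr2; nra.
Qed.

Let RexpectationD f g : f \in L1 -> g \in L1 ->
  Rexpectation (fun w => f w + g w) = Rexpectation f + Rexpectation g.
Proof.
move=> fL gL; have := expectationD fL gL.
by rewrite (Lfun1_expectationE fL) (Lfun1_expectationE gL) /Rexpectation => ->.
Qed.

Let RexpectationZ f k : f \in L1 -> Rexpectation (fun w => k * f w) = k * Rexpectation f.
Proof.
move=> fL; have -> : (fun w => k * f w) = k \o* f by apply/funext => w; rewrite mulrC.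
by rewrite /Rexpectation expectationZl // Lfun1_expectationE.
Qed.

Lemma Rexpectation_cst k : Rexpectation (fun=> k) = k.
Proof. by rewrite /Rexpectation expectation_cst. Qed.

Lemma Lfun1_lin3 f1 f2 f3 k1 k2 k3 b : f1 \in L1 -> f2 \in L1 -> f3 \in L1 ->
  (fun w => k1 * f1 w + k2 * f2 w + k3 * f3 w + b) \in L1.
Proof. by move=> f1L f2L f3L; rewrite !Lfun1D ?Lfun1Z ?Lfun_cst. Qed.

Lemma Rexpectation_lin3 f1 f2 f3 k1 k2 k3 b : f1 \in L1 -> f2 \in L1 -> f3 \in L1 ->
  Rexpectation (fun w => k1 * f1 w + k2 * f2 w + k3 * f3 w + b) =
  k1 * Rexpectation f1 + k2 * Rexpectation f2 + k3 * Rexpectation f3 + b.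
Proof.
move=> f1L f2L f3L.
by rewrite !RexpectationD ?Lfun1D ?Lfun1Z ?Lfun_cst // !RexpectationZ // Rexpectation_cst.
Qed.

Lemma le_Rexpectation f g : f \in L1 -> g \in L1 ->
  (forall w, f w <= g w) -> Rexpectation f <= Rexpectation g.
Proof.
move=> fL gL fg; rewrite -lee_fin -!Lfun1_expectationE // unlock.
apply: le_integral => //; [exact/Lfun1_integrable | exact/Lfun1_integrable |].
by move=> w _; rewrite lee_fin.
Qed.

Lemma Rexpectation_sqr_centered_le f M c : measurable_fun setT f ->
  (forall w, `|f w| <= M) ->
  Rexpectation (fun w => (f w - Rexpectation f) ^+ 2) <= Rexpectation (fun w => (f w - c) ^+ 2).
Proof.
move=> mf fM; set m := Rexpectation f.
have fL : f \in L1 := Lfun1_bounded mf fM.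
have fmL := Lfun1_sqr_bounded m mf fM.
have -> : (fun w => (f w - c) ^+ 2) = (fun w => 1 * (f w - m) ^+ 2 +
    2 * (m - c) * f w + 0 * f w + ((m - c) ^+ 2 - 2 * (m - c) * m)).
  by apply/funext => w; ring.
rewrite Rexpectation_lin3 // -/m; have := sqr_ge0 (m - c); lra.
Qed.

End real_expectation.

Section fluctuations_between_slopes.
Context d (T : measurableType d) (R : realType) (P : probability T R).
Variables (F G : R -> T -> R) (K : R).
Hypothesis mF : forall h, measurable_fun setT (F h).
Hypothesis mG : forall h, measurable_fun setT (G h).
Hypothesis F_concentration : forall h,
  ('E_P[fun w => ((F h w - fine 'E_P[F h]) ^+ 2)%R] <= K%:E)%E.
Hypothesis F_lipschitz : forall a b w, `|F a w - F b w| <= `|a - b|.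
Hypothesis F_convex : forall h e w, 0 <= F (h + e) w + F (h - e) w - 2 * F h w.
Hypothesis G_between_slopes : forall h e w, 0 < e ->
  (F h w - F (h - e) w) / e <= G h w <= (F (h + e) w - F h w) / e.
Hypothesis G_bounded : forall h w, `|G h w| <= 1.

Let p h := Rexpectation P (F h).

Let Lfun1_sqr_fluctuation h : (fun w => (F h w - p h) ^+ 2) \in Lfun P 1.
Proof. by apply: Lfun1_sqr (F_concentration h); exact: measurable_funB. Qed.

Let Rexpectation_sqr_fluctuation_le h :
  Rexpectation P (fun w => (F h w - p h) ^+ 2) <= K.
Proof. by rewrite -lee_fin -Lfun1_expectationE. Qed.

Let Lfun1_F h : F h \in Lfun P 1.
Proof.
have fL : (fun w => F h w - p h) \in Lfun P 1.
  by apply: Lfun1_of_sqr; [exact: measurable_funB | exact: Lfun1_sqr_fluctuation].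
have -> : F h = (fun w => (F h w - p h) + cst (p h) w) by apply/funext => w; rewrite subrK.
exact: Lfun1D fL (Lfun_cst P (p h) 1).
Qed.

Let le_p_lin3 a b c ka kb kc m : (forall w, m <= ka * F a w + kb * F b w + kc * F c w) ->
  m <= ka * p a + kb * p b + kc * p c.
Proof.
move=> mF3; rewrite -[leLHS](Rexpectation_cst P) -[leRHS]addr0 -Rexpectation_lin3 //.
by apply: le_Rexpectation; rewrite ?Lfun_cst ?Lfun1_lin3 // => w; rewrite addr0.
Qed.

Let p_lipschitz a b : `|p a - p b| <= `|a - b|.
Proof.
have lip w : - `|a - b| <= F a w - F b w <= `|a - b| by rewrite -ler_norml.
have /andP[lo hi] : (- `|a - b| <= 1 * p a + -1 * p b + 0 * p b) &&
                    (- `|a - b| <= -1 * p a + 1 * p b + 0 * p b).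
  by apply/andP; split; apply: le_p_lin3 => w; have /andP[? ?] := lip w; lra.
by rewrite ler_norml; apply/andP; split; lra.
Qed.

Let p_convex h e : 0 <= p (h + e) + p (h - e) - 2 * p h.
Proof.
have : 0 <= 1 * p (h + e) + 1 * p (h - e) + -2 * p h.
  by apply: le_p_lin3 => w; have := F_convex h e w; lra.
lra.
Qed.

Lemma variance_le_second_difference h e : 0 < e ->
  ('E_P[fun w => ((G h w - fine 'E_P[G h]) ^+ 2)%R] <=
   (12 * K / e ^+ 2 + 4 * ((p (h + e) + p (h - e) - 2 * p h) / e))%:E)%E.
Proof.
move=> e_gt0; set c := (p (h + e) - p h) / e; set t := (_ + _ - _) / e.
rewrite (Lfun1_expectationE (Lfun1_sqr_bounded P _ (mG h) (G_bounded h))) lee_fin.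
apply: (le_trans (Rexpectation_sqr_centered_le P c (mG h) (G_bounded h))).
apply: (le_trans (le_Rexpectation (Lfun1_sqr_bounded P c (mG h) (G_bounded h))
  (Lfun1_lin3 (2 / e ^+ 2) (6 / e ^+ 2) (4 / e ^+ 2) (2 * t ^+ 2)
    (Lfun1_sqr_fluctuation (h + e)) (Lfun1_sqr_fluctuation h)
    (Lfun1_sqr_fluctuation (h - e))) _)).
  by move=> w; apply: sqr_dev_le_between_slopes => //; exact: G_between_slopes.
rewrite Rexpectation_lin3 //.
have t_ge0 : 0 <= t by rewrite divr_ge0 ?p_convex // ltW.
have t_le2 : t <= 2.
  have := p_lipschitz (h + e) h; have := p_lipschitz (h - e) h.
  have -> : h + e - h = e by ring.
  have -> : h - e - h = - e by ring.
  rewrite normrN (gtr0_norm e_gt0) !ler_norml => /andP[_ ?] /andP[_ ?].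
  rewrite ler_pdivrMr //; lra.
have := Rexpectation_sqr_fluctuation_le (h + e); have := Rexpectation_sqr_fluctuation_le h.
have := Rexpectation_sqr_fluctuation_le (h - e).
set Em := Rexpectation _ _; set E0 := Rexpectation _ _; set Ep := Rexpectation _ _ => ? ? ?.
have : (2 * Ep + 6 * E0 + 4 * Em) / e ^+ 2 <= 12 * K / e ^+ 2.
  by rewrite ler_wpM2r ?invr_ge0 ?exprn_ge0 ?(ltW e_gt0) //; lra.
have : 2 * t ^+ 2 <= 4 * t by rewrite expr2; nra.
lra.
Qed.

Lemma integral_variance_le a b e : a <= b -> 0 < e ->
  (\int[lebesgue_measure]_(h in `[a, b]) 'E_P[fun w => ((G h w - fine 'E_P[G h]) ^+ 2)%R] <=
   (12 * K / e ^+ 2 * (b - a) + 16 * e)%:E)%E.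
Proof.
move=> ab e_gt0; have -> : 16 * e = 4 * 4 * e by ring.
apply: le_trans (integral_second_difference_le _ p_lipschitz ab e_gt0 (_ : 0 <= 4)) => //.
apply: ge0_le_integral_nonmeasurable => h _; last exact: variance_le_second_difference.
by apply: expectation_ge0 => w; exact: sqr_ge0.
Qed.

End fluctuations_between_slopes.

Lemma cube_powR_one_third (R : realType) (x : R) : 0 <= x -> (x `^ (1 / 3)) ^+ 3 = x.
Proof.
move=> x_ge0; rewrite -powR_mulrn ?powR_ge0 // -powRrM (_ : 1 / 3 * 3%:R = 1) ?powRr1 //.
by field.
Qed.

Unset Implicit Arguments.
Set Strict Implicit.
Theorem lemma3p2 (R : realType) (d : measure_display) (T : measurableType d)
  (P : probability T R)
  (J : forall n : nat, {set 'I_n} -> T -> R)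
  (tau : forall n : nat, R -> 'I_n -> T -> nat)
  (theta h1 alpha hlo hhi C CP : R) :
  1 / 2 < theta -> theta <= 7 / 8 ->
  0 <= h1 <= 1 -> 0 <= alpha <= 1 ->
  0 < hlo -> hlo <= hhi -> hhi < 1 ->
  0 < CP ->
  (* couplings: nonnegative, finite second moments *)
  (forall n (X : {set 'I_n}) w, 0 <= J n X w) ->
  (forall n (X : {set 'I_n}), J n X \in Lfun P 2%:E) ->
  (* sum_X Var(J_X) <= C n *)
  (forall n, (\sum_(X : {set 'I_n}) variance P (J n X) <= (C * n%:R)%:E)%E) ->
  (* tau_i (for Poisson mean lam) measurable with law Poisson(lam) *)
  (forall n (lam : R) (i : 'I_n), 0 <= lam -> measurable_fun setT (tau n lam i)) ->
  (forall n (lam : R) (i : 'I_n) (U : set nat), 0 <= lam ->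
     P (tau n lam i @^-1` U) = poisson_prob lam 0%N U) ->
  (* all J_X and tau_i mutually independent *)
  (forall n (lam : R), 0 <= lam ->
     mutually_independent P (coupling_family (J n) (tau n lam))) ->
  (* concentration of the pressure, for all parameters *)
  (forall n (h0 h1' alpha' : R), (0 < n)%N -> 0 <= h1' <= 1 -> 0 <= alpha' <= 1 ->
     let Pn := fun w => pressure (fun X => J n X w)
                 (fun i => (tau n (poisson_mean alpha' theta n) i w)%:R) h0 h1' in
     ('E_P[fun w => ((Pn w - fine 'E_P[Pn]) ^+ 2)%R] <= (CP / n%:R)%:E)%E) ->
  exists N : nat, forall n : nat, (N <= n)%N ->
    (\int[lebesgue_measure]_(h0 in `[hlo, hhi])
       (let G := fun w => gibbs_Q1 (fun X => J n X w)
                   (fun i => (tau n (poisson_mean alpha theta n) i w)%:R) h0 h1 in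
        'E_P[fun w => ((G w - fine 'E_P[G]) ^+ 2)%R])
     <= ((5 * CP + 40) / n%:R `^ (1 / 3))%:E)%E.
Proof.
(* The hypotheses on [theta], on the variances of the couplings, on the laws of the [tau_i]
   and on independence serve in the paper only to prove the concentration bound on the
   pressure, which is assumed here. *)
move=> _ _ h1_01 alpha_01 hlo_gt0 hlo_le_hhi hhi_lt1 CP_gt0 _ J_L2 _ tau_meas _ _ concentration.
exists 1%N => n n_gt0; set lam := poisson_mean alpha theta n.
have lam_ge0 : 0 <= lam.
  by rewrite /lam /poisson_mean mulr_ge0 ?powR_ge0 //; case/andP: alpha_01.
have mJ X : measurable_fun setT (J n X) := Lfun_measurable (J_L2 n X).
have mtau i : measurable_fun setT (fun w => (tau n lam i w)%:R : R).
  by apply: measurableT_comp (tau_meas n lam i lam_ge0) => // _ B _; rewrite setTI.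
set t := n%:R `^ (1 / 3); have t_gt0 : 0 < t by rewrite powR_gt0 // ltr0n.
have t3 : t ^+ 3 = n%:R by exact: cube_powR_one_third.
apply: le_trans (integral_variance_le (K := CP / n%:R)
  (fun h => measurable_pressure h h1 mJ mtau) (fun h => measurable_gibbs_Q1 h h1 mJ mtau)
  (fun h => concentration n h h1 alpha n_gt0 h1_01 alpha_01)
  (fun a b w => pressure_lipschitz _ _ h1 n_gt0 a b)
  (fun h e w => pressure_convex _ _ h1 n_gt0 h e)
  (fun h e w => gibbs_Q1_between_slopes _ _ h1 n_gt0 h (d := e))
  (fun h w => normr_gibbs_Q1 _ _ h1 h)
  hlo_le_hhi (_ : 0 < 2 / t)) _; first by rewrite divr_gt0.
rewrite lee_fin -t3.
have -> : 12 * (CP / t ^+ 3) / (2 / t) ^+ 2 * (hhi - hlo) + 16 * (2 / t) =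
  (3 * CP * (hhi - hlo) + 32) / t by field; rewrite gt_eqF.
rewrite ler_pM2r ?invr_gt0 //.
have : hhi - hlo <= 1 by lra.
nra.
Qed.
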